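(* Let $k\ge 3$ and $n_1=\cdots=n_k\ge 2$. The number of distinct isomorphism classes of graphs in the LC orbit $\mathcal{O}(K_{n_1,\dots,n_k})$ is $\lfloor k/2\rfloor+k+1$.
   Context: $K_{n_1,\dots,n_k}$ is the complete $k$-partite graph with parts of sizes $n_1,\dots,n_k$. The local complement $c_v(G)$ complements the edges among the neighbours of $v$; $\mathcal{O}(G)$ is the set of all graphs on the labelled vertex set $V(G)$ obtainable from $G$ by finite sequences of local complements. *)

From mathcomp Require Import all_boot fingroup perm.
Set Implicit Arguments. Unset Strict Implicit. Unset Printing Implicit Defensive.

Definition graph (V : finType) := {set V * V}.

Definition simple_graph (V : finType) (G : graph V) : bool :=
  [forall x : V, forall y : V, ((x, y) \in G) == ((y, x) \in G)] &&
  [forall x : V, (x, x) \notin G].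

Definition nbhd (V : finType) (G : graph V) (v : V) : {set V} :=
  [set u | (v, u) \in G].

Definition local_complement (V : finType) (v : V) (G : graph V) : graph V :=
  [set p : V * V |
     if [&& p.1 \in nbhd G v, p.2 \in nbhd G v & p.1 != p.2]
     then p \notin G else p \in G].

Definition lc_step (V : finType) : rel (graph V) :=
  fun G H => [exists v : V, H == local_complement v G].

Definition lc_orbit (V : finType) (G : graph V) : {set graph V} :=
  [set H | connect (@lc_step V) G H].

Definition graph_iso (V : finType) (G H : graph V) : bool :=
  [exists s : {perm V},
     [forall x : V, forall y : V, ((x, y) \in G) == ((s x, s y) \in H)]].

(* the set of isomorphism classes of graphs in a family S (each class
   represented by its intersection with S) *)
Definition iso_classes (V : finType) (S : {set graph V}) : {set {set graph V}} :=
  [set [set H' in S | graph_iso H H'] | H in S].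

(* complete k-partite graph K_{n,...,n}: vertex (i, a) is the a-th vertex of part i *)
Definition complete_multipartite (k n : nat) : graph ('I_k * 'I_n)%type :=
  [set p : (('I_k * 'I_n) * ('I_k * 'I_n))%type | p.1.1 != p.2.1].

(* Every graph in the orbit is [lc_graph p] for an admissible parameter [p]: an
   optional hub part and, for each part, a kind (independent set, clique, or star
   with a centre).  Local complementation acts on the parameters by
   [lc_param_step] and preserves the parity of the number of star parts
   (corrected by the kind of the hub).  Up to isomorphism [lc_graph p] depends
   only on whether there is a hub and on the number of stars, which is even
   without a hub and less than k with one; all these values occur in the orbit.
   The number of pendant vertices, (n - 1) times the number of stars, together
   with the existence of adjacent twins and of triangles, which agree exactly
   when there is a hub, separate the k/2 + 1 + k classes. *)

From mathcomp Require Import all_boot fingroup perm zify.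
Set Implicit Arguments. Unset Strict Implicit. Unset Printing Implicit Defensive.

Section GraphIsomorphism.
Variable V : finType.
Implicit Types G H K : graph V.

Lemma graph_isoP G H :
  reflect (exists s : {perm V}, forall x y, ((x, y) \in G) = ((s x, s y) \in H))
          (graph_iso G H).
Proof.
apply: (iffP existsP) => [[s /forallP hs]|[s hs]]; exists s.
- by move=> x y; have /forallP/(_ y)/eqP := hs x.
- by apply/forallP => x; apply/forallP => y; rewrite hs.
Qed.

Lemma graph_iso_refl G : graph_iso G G.
Proof. by apply/graph_isoP; exists 1%g => x y; rewrite !perm1. Qed.

Lemma graph_iso_sym G H : graph_iso G H -> graph_iso H G.
Proof.
case/graph_isoP => s hs; apply/graph_isoP; exists s^-1%g => x y.
by rewrite hs !permKV.
Qed.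

Lemma graph_iso_trans G H K : graph_iso G H -> graph_iso H K -> graph_iso G K.
Proof.
case/graph_isoP => s hs /graph_isoP [u hu]; apply/graph_isoP; exists (s * u)%g.
by move=> x y; rewrite hs hu !permM.
Qed.

Definition pendants G := #|[set x | #|nbhd G x| == 1]|.

Definition has_adjacent_twins G :=
  [exists x, exists y, [&& x != y, (x, y) \in G &
     [forall z, ((z == x) || ((x, z) \in G)) == ((z == y) || ((y, z) \in G))]]].

Definition has_triangle G :=
  [exists x, exists y, exists z, [&& (x, y) \in G, (y, z) \in G & (x, z) \in G]].

Definition iso_invariants G := (pendants G, has_adjacent_twins G, has_triangle G).

Lemma nbhd_perm (s : {perm V}) G H :
    (forall x y, ((x, y) \in G) = ((s x, s y) \in H)) ->
  forall x, nbhd H (s x) = s @: nbhd G x.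
Proof.
move=> hs x; apply/setP => y; rewrite -[y](permKV s) mem_imset; last exact: perm_inj.
by rewrite !inE hs.
Qed.

Lemma pendants_iso G H : graph_iso G H -> pendants G = pendants H.
Proof.
case/graph_isoP => s hs; rewrite /pendants.
have -> : [set x | #|nbhd H x| == 1] = s @: [set x | #|nbhd G x| == 1].
  apply/setP => y; rewrite -[y](permKV s) mem_imset; last exact: perm_inj.
  by rewrite !inE (nbhd_perm hs) card_imset //; apply: perm_inj.
by rewrite card_imset //; apply: perm_inj.
Qed.

Lemma adjacent_twins_iso G H :
  graph_iso G H -> has_adjacent_twins G -> has_adjacent_twins H.
Proof.
case/graph_isoP => s hs /existsP [x /existsP [y /and3P [nxy axy /forallP hz]]].
apply/existsP; exists (s x); apply/existsP; exists (s y).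
rewrite -hs axy (inj_eq (@perm_inj _ s)) nxy /=; apply/forallP => z.
by rewrite -[z](permKV s) -!hs !(inj_eq (@perm_inj _ s)); apply: hz.
Qed.

Lemma triangle_iso G H : graph_iso G H -> has_triangle G -> has_triangle H.
Proof.
case/graph_isoP => s hs /existsP [x /existsP [y /existsP [z /and3P [h1 h2 h3]]]].
apply/existsP; exists (s x); apply/existsP; exists (s y); apply/existsP; exists (s z).
by rewrite -!hs h1 h2 h3.
Qed.

Lemma iso_invariants_iso G H : graph_iso G H -> iso_invariants G = iso_invariants H.
Proof.
move=> h; have h' := graph_iso_sym h; rewrite /iso_invariants (pendants_iso h).
congr (_, _, _); apply/idP/idP.
- exact: adjacent_twins_iso h.
- exact: adjacent_twins_iso h'.
- exact: triangle_iso h.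
- exact: triangle_iso h'.
Qed.

Lemma card_iso_classes (S : {set graph V}) (I : finType) (R : I -> graph V) :
    (forall i, R i \in S) ->
    (forall i j, graph_iso (R i) (R j) -> i = j) ->
    (forall H, H \in S -> exists i, graph_iso H (R i)) ->
  #|iso_classes S| = #|I|.
Proof.
move=> RS Rinj Rcov.
pose cls H := [set H' in S | graph_iso H H'].
have clsE G H : graph_iso G H -> cls G = cls H.
  move=> gh; apply/setP => K; rewrite !inE; case: (K \in S) => //=.
  by apply/idP/idP => h; [exact: graph_iso_trans (graph_iso_sym gh) h
                         | exact: graph_iso_trans gh h].
have -> : iso_classes S = (fun i => cls (R i)) @: [set: I].
  apply/setP => C; apply/imsetP/imsetP => [[H HS ->]|[i _ ->]].
  - by have [i hi] := Rcov H HS; exists i; rewrite ?inE //; exact: clsE hi.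
  - by exists (R i).
rewrite card_imset ?cardsT // => i j e.
apply: Rinj; have : R j \in cls (R j) by rewrite inE RS graph_iso_refl.
by rewrite -e inE => /andP [].
Qed.

Lemma lc_orbit_step G H v : H \in lc_orbit G -> local_complement v H \in lc_orbit G.
Proof.
rewrite !inE => h; apply: connect_trans h (connect1 _).
by apply/existsP; exists v.
Qed.

End GraphIsomorphism.

Lemma perm_of_card_eq (T : finType) (X Y : {set T}) : #|X| = #|Y| ->
  exists s : {perm T}, (forall x, (s x \in Y) = (x \in X)) /\
                       (forall x, x \notin X -> x \notin Y -> s x = x).
Proof.
move e: #|X :\: Y| => m; elim: m X e => [|m IH] X e hXY.
  have sXY : X \subset Y by rewrite -setD_eq0 -cards_eq0 e.
  have eXY : X = Y by apply/eqP; rewrite eqEcard sXY hXY leqnn.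
  by subst Y; exists 1%g; split => i; rewrite perm1.
have [a aXY] : exists a, a \in X :\: Y by apply/set0Pn; rewrite -card_gt0 e.
have eYX : #|Y :\: X| = m.+1.
  by move: hXY e; rewrite -(cardsID Y X) -(cardsID X Y) setIC; lia.
have [b bYX] : exists b, b \in Y :\: X by apply/set0Pn; rewrite -card_gt0 eYX.
move: aXY bYX; rewrite !inE => /andP [aY aX] /andP [bX bY].
pose X' := tperm a b @: X.
have mX' z : (z \in X') = (tperm a b z \in X).
  by rewrite -{1}[z](tpermK a b) mem_imset //; apply: perm_inj.
have e' : #|X' :\: Y| = m.
  have -> : X' :\: Y = (X :\: Y) :\ a.
    apply/setP => z; rewrite !inE mX'.
    case: (tpermP a b z) => [->|->|za zb]; rewrite ?eqxx ?aY ?bY ?bX ?andbF //=.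
    - by rewrite (negbTE bX).
    - by rewrite (introN eqP za).
  by move: e; rewrite (cardsD1 a (X :\: Y)) !inE aY aX /=; lia.
have hX' : #|X'| = #|Y| by rewrite card_imset ?hXY //; apply: perm_inj.
have [s [h1 h2]] := IH X' e' hX'.
exists (tperm a b * s)%g; split => i.
- by rewrite permM h1 mX' tpermK.
- move=> iX iY; have ia : i != a by apply: contraNneq iX => ->.
  have ib : i != b by apply: contraNneq iY => ->.
  rewrite permM tpermD 1?eq_sym //; apply: h2 => //.
  by rewrite mX' tpermD 1?eq_sym.
Qed.

Lemma tperm_eqR (T : finType) (u v x : T) : (tperm u v x == v) = (x == u).
Proof. by rewrite -[X in _ == X](tpermL u v) (inj_eq perm_inj). Qed.

Lemma two_others k (i : 'I_k) : 2 < k -> exists j1 j2 : 'I_k, [/\ j1 != i, j2 != i & j1 != j2].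
Proof.
move=> hk; have h0 : 0 < k by lia. have h1 : 1 < k by lia.
pose o0 := Ordinal h0; pose o1 := Ordinal h1; pose o2 := Ordinal hk.
case: (i =P o0) => [->|n0]; first by exists o1, o2.
case: (i =P o1) => [->|n1]; first by exists o0, o2.
by exists o0, o1; split => //; apply/eqP => e; [exact: n0 | exact: n1].
Qed.

Lemma exists_neq n (a : 'I_n) : 1 < n -> exists b, b != a.
Proof.
move=> hn; have h0 : 0 < n by lia.
case: (a =P Ordinal h0) => [->|na]; first by exists (Ordinal hn).
by exists (Ordinal h0); apply/eqP => e; apply: na.
Qed.

Inductive part_kind := Indep | Clique | Star.

Definition is_indep t := if t is Indep then true else false.
Definition is_clique t := if t is Clique then true else false.
Definition is_star t := if t is Star then true else false.
Definition flip_kind t := match t with Indep => Clique | Clique => Indep | Star => Star end.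

Section LcFamily.
Variables k n : nat.
Notation V := ('I_k * 'I_n)%type.

Record lc_param := LcParam {
  hub : option 'I_k; kind : 'I_k -> part_kind; centre : 'I_k -> 'I_n }.

(* Part [i] of [lc_graph p] induces an independent set, a clique or a star
   centred at [centre p i], according to [kind p i]; only the centre of a star
   part has neighbours outside its part.  Between such vertices, two distinct
   parts are completely joined when there is no hub, and otherwise exactly
   when one of them is the hub. *)
Definition external p (x : V) :=
  if kind p x.1 is Star then x.2 == centre p x.1 else true.
Definition linked p (i j : 'I_k) :=
  if hub p is Some s then (i == s) || (j == s) else true.
Definition internal_adj p (i : 'I_k) (a b : 'I_n) :=
  match kind p i with
  | Indep => false | Clique => true | Star => (a == centre p i) || (b == centre p i)
  end.
Definition lc_adj p (x y : V) :=
  if x.1 == y.1 then (x.2 != y.2) && internal_adj p x.1 x.2 y.2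
  else [&& linked p x.1 y.1, external p x & external p y].
Definition lc_graph p : graph V := [set e | lc_adj p e.1 e.2].

(* In the two [else p] branches [v] is a leaf of a star part: its only
   neighbour is the centre, and local complementation at [v] does nothing. *)
Definition lc_param_step p (v : V) : lc_param :=
  let l := v.1 in let d := v.2 in
  match hub p with
  | None =>
      if is_indep (kind p l) || (d == centre p l) then
        LcParam (Some l)
          (fun j => if j == l then (if kind p l is Indep then Indep else Clique)
                    else flip_kind (kind p j))
          (centre p)
      else p
  | Some s =>
      if l == s then
        LcParam None
          (fun j => if j == s then (if kind p s is Indep then Indep else Star)
                    else flip_kind (kind p j))
          (fun j => if j == s then d else centre p j)
      else if is_clique (kind p l) || (d == centre p l) then
        LcParam (Some s)
          (fun j => if j == l then (if kind p l is Clique then Star else Clique)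
                    else if j == s then flip_kind (kind p j) else kind p j)
          (fun j => if j == l then d else centre p j)
      else p
  end.

Definition kinds_ok p : Prop :=
  match hub p with
  | None => forall i, ~~ is_clique (kind p i)
  | Some s => ~~ is_star (kind p s) /\ forall j, j != s -> ~~ is_indep (kind p j)
  end.

Definition star_count (t : 'I_k -> part_kind) := #|[set i | is_star (t i)]|.

Definition parity_ok p :=
  match hub p with
  | None => ~~ odd (star_count (kind p))
  | Some s => ~~ odd (star_count (kind p) + is_clique (kind p s))
  end.

Definition admissible p := kinds_ok p /\ parity_ok p.

(* Adjacency in the family is decided by the equalities among the few parts and
   vertices involved and by the kinds of those parts, so an exhaustive case
   split on these closes every such goal. *)
Ltac case_parts :=
  repeat (match goal with
  | |- context [?a == ?b] => let T := type of a in unify T ('I_k);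
      case: (a =P b) => [?|?]; subst
  end; rewrite /= ?eqxx ?andbF ?andbT ?orbF ?orbT //=).
Ltac case_kinds :=
  repeat (match goal with
  | |- context [?f ?i] => match type of f with _ -> part_kind => case: (f i) end
  end; rewrite /= ?eqxx ?andbF ?andbT ?orbF ?orbT //=).
Ltac case_rest :=
  repeat (match goal with
  | |- context [?a == ?b] => let T := type of a in
      tryif unify T bool then fail else
      case: (a =P b) => [?|?]; subst
  end; rewrite /= ?eqxx ?andbF ?andbT ?orbF ?orbT //=); intros;
  repeat match goal with
  | H : true = (?a == ?b) |- _ => move: H => /esym /eqP H
  | H : is_true (?a == ?b) |- _ => move/eqP: H => H
  | H : false = (?a == ?b) |- _ => move: H => /esym /negbT /eqP H
  | H : (?a == ?b) = false |- _ => move: H => /negbT /eqP H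
  | H : (?a != ?b) = false |- _ => move: H => /negbFE /eqP H
  | H : false = (?a != ?b) |- _ => move: H => /esym /negbFE /eqP H
  | H : true = (?a != ?b) |- _ => move: H => /esym /eqP H
  | H : is_true (?a != ?b) |- _ => move: H => /eqP H
  end; try congruence;
  repeat match goal with H : is_true true -> is_true false |- _ => by have := H isT end.
Ltac case_bash := case_parts; case_kinds; case_rest.
Ltac unfold_adj := rewrite /lc_adj /external /linked /internal_adj /=.

Lemma local_complement_lc_graph p v :
  kinds_ok p -> local_complement v (lc_graph p) = lc_graph (lc_param_step p v).
Proof.
case: p => q t c; case: v => l d; rewrite /kinds_ok /=.
move=> hv; apply/setP => -[[i a] [j b]].
rewrite /local_complement /lc_graph /nbhd !inE /= xpair_eqE.
case: q hv => [s [hs ht]|hv] /=; rewrite /lc_param_step /=.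
- have hi := ht i; have hj := ht j; have hl := ht l.
  case: (l =P s) => [->|/eqP nls].
  + unfold_adj; rewrite eqxx.
    by move: hs hi hj; case E: (t s) => //= _; move: E; case_bash.
  + have {}hl := hl nls; unfold_adj.
    move: hl hi hj hs; case E: (t l) => //= _; move: E.
    * case_bash.
    * case: (d =P c l) => [->|ndc] /=; rewrite ?eqxx /=; case_bash.
- have hi := hv i; have hj := hv j; have hl := hv l.
  unfold_adj; move: hl hi hj; case E: (t l) => //= _; move: E.
  + case_bash.
  + case: (d =P c l) => [->|ndc] /=; rewrite ?eqxx /=; case_bash.
Qed.

Lemma star_count_update (t t' : 'I_k -> part_kind) l :
    (forall j, j != l -> is_star (t' j) = is_star (t j)) ->
  star_count t' + is_star (t l) = star_count t + is_star (t' l).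
Proof.
move=> h; rewrite /star_count (cardsD1 l [set i | is_star (t i)]).
rewrite (cardsD1 l [set i | is_star (t' i)]) !inE.
have -> : [set i | is_star (t' i)] :\ l = [set i | is_star (t i)] :\ l.
  by apply/setP => j; rewrite !inE; case: (j =P l) => [->|/eqP nj] //=; rewrite h.
lia.
Qed.

Lemma odd_star_count_update (t t' : 'I_k -> part_kind) l :
    (forall j, j != l -> is_star (t' j) = is_star (t j)) ->
  odd (star_count t') = odd (star_count t) (+) is_star (t l) (+) is_star (t' l).
Proof.
move=> /star_count_update e; have := congr1 odd e; rewrite !oddD.
by case: (odd (star_count t')); case: (odd (star_count t));
   case: (is_star (t l)); case: (is_star (t' l)).
Qed.

Lemma admissible_step p v : admissible p -> admissible (lc_param_step p v).
Proof.
case: p => q t c; case: v => l d.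
rewrite /admissible /kinds_ok /parity_ok /lc_param_step /=.
case: q => [s [[hs ht] hp]|[hv hp]] /=.
- case: (l =P s) => [els|nls] /=; first subst l.
  + split.
    * by move=> j; case: (j =P s) => [_|/eqP js] /=;
        [case: (t s) hs | have := ht j js; case: (t j)].
    * rewrite (@odd_star_count_update t _ s) /= ?eqxx; last first.
        by move=> j /negbTE /= ->; case: (t j).
      by move: hp hs; rewrite oddD; case: (t s); case: (odd (star_count t)).
  + have /ht htl : l != s by apply/eqP.
    have sl : (s == l) = false by apply/eqP => e; apply: nls.
    case hB: (is_clique (t l) || (d == c l)) => /=; last by split.
    split.
    * rewrite eqxx sl; split; first by case: (t s) hs.
      move=> j js; case: (j =P l) => [_|_] /=; first by case: (t l).
      by rewrite (negbTE js); apply: ht.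
    * rewrite oddD (@odd_star_count_update t _ l) /= ?eqxx ?sl; last first.
        by move=> j /negbTE /= ->; case: (j == s) => //; case: (t j).
      by move: hp hs htl hB; rewrite oddD;
         case: (t s); case: (t l); case: (odd (star_count t)).
- case hB: (is_indep (t l) || (d == c l)) => /=; last by split.
  split.
  + rewrite eqxx; split; first by case: (t l) (hv l).
    by move=> j /negbTE ->; move: (hv j); case: (t j).
  + rewrite oddD (@odd_star_count_update t _ l) /= ?eqxx; last first.
      by move=> j /negbTE /= ->; case: (t j).
    by move: hp (hv l) hB; case: (t l); case: (odd (star_count t)).
Qed.

Lemma lc_orbit_lc_graph p H :
  admissible p -> H \in lc_orbit (lc_graph p) ->
  exists2 p', admissible p' & H = lc_graph p'.
Proof.
rewrite inE => ap /connectP [s hs ->].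
elim: s p ap hs => [|G s IH] p ap /=; first by exists p.
case/andP => /existsP [v /eqP ->] hs.
rewrite (local_complement_lc_graph _ ap.1) in hs *.
exact: IH (admissible_step v ap) hs.
Qed.

Lemma lc_graph_ext p p' :
    hub p = hub p' -> (forall i, kind p i = kind p' i) ->
    (forall i, is_star (kind p i) -> centre p i = centre p' i) ->
  lc_graph p = lc_graph p'.
Proof.
case: p => q t c; case: p' => q' t' c' /= -> ht hc.
apply/setP => -[[i a] [j b]]; rewrite !inE; unfold_adj; rewrite !ht.
have hci := hc i; have hcj := hc j; rewrite !ht in hci hcj.
by case: (t' i) hci => [_|_|/(_ isT) ->]; case: (t' j) hcj => [_|_|/(_ isT) ->].
Qed.

Definition multipartite_param (c : 'I_k -> 'I_n) := LcParam None (fun _ => Indep) c.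

Lemma complete_multipartite_lc_graph c :
  complete_multipartite k n = lc_graph (multipartite_param c).
Proof.
apply/setP => -[[i a] [j b]]; rewrite /complete_multipartite /lc_graph !inE.
by unfold_adj; case: (i == j); rewrite ?andbF.
Qed.

Lemma admissible_multipartite c : admissible (multipartite_param c).
Proof.
split=> //; rewrite /parity_ok /star_count /=.
by rewrite (_ : [set i | _] = set0) ?cards0 //; apply/setP => i; rewrite !inE.
Qed.

Lemma star_count_le (t : 'I_k -> part_kind) : star_count t <= k.
Proof. by rewrite /star_count; apply: leq_trans (max_card _) _; rewrite card_ord. Qed.

Lemma star_count_lt_hub p s : hub p = Some s -> kinds_ok p -> star_count (kind p) < k.
Proof.
case: p => q t c /= -> [hs _]; rewrite /star_count.
have : [set i | is_star (t i)] \proper [set: 'I_k].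
  rewrite properT; apply/eqP => e; move: hs.
  by have := in_setT s; rewrite -e inE => ->.
by move/proper_card; rewrite cardsT card_ord.
Qed.

Lemma lc_graph_relabel_iso p p' (pi : {perm 'I_k}) :
    hub p' = omap pi (hub p) -> (forall i, kind p' (pi i) = kind p i) ->
  graph_iso (lc_graph p) (lc_graph p').
Proof.
move=> hq ht.
pose f (x : V) := (pi x.1, tperm (centre p x.1) (centre p' (pi x.1)) x.2).
have finj : injective f.
  by move=> [i a] [j b]; rewrite /f /= => -[/perm_inj eij]; subst j; move/perm_inj ->.
apply/graph_isoP; exists (perm finj) => -[i a] [j b].
rewrite !permE /f /lc_graph !inE; unfold_adj.
rewrite hq !ht (inj_eq perm_inj) !tperm_eqR.
case: (i =P j) => [eij|nij] /=.
- by subst j; rewrite !(inj_eq perm_inj) !tperm_eqR; case: (kind p i).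
- by case: (hub p) => //= s; rewrite !(inj_eq perm_inj).
Qed.

Lemma lc_graph_iso_hubless p p' :
    hub p = None -> hub p' = None -> kinds_ok p -> kinds_ok p' ->
    star_count (kind p) = star_count (kind p') ->
  graph_iso (lc_graph p) (lc_graph p').
Proof.
case: p => q t c; case: p' => q' t' c'; rewrite /kinds_ok /= => -> -> hv hv' ec.
have [pi [h1 _]] := perm_of_card_eq ec.
apply: (@lc_graph_relabel_iso _ _ pi) => //= i.
have := h1 i; rewrite !inE.
by move: (hv i) (hv' (pi i)); case: (t i); case: (t' (pi i)).
Qed.

Lemma lc_graph_iso_hub p p' s s' :
    hub p = Some s -> hub p' = Some s' -> admissible p -> admissible p' ->
    star_count (kind p) = star_count (kind p') ->
  graph_iso (lc_graph p) (lc_graph p').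
Proof.
case: p => q t c; case: p' => q' t' c'.
rewrite /admissible /kinds_ok /parity_ok /= => -> -> [[hs ht] hp] [[hs' ht'] hp'] ec.
pose X := tperm s s' @: [set i | is_star (t i)].
have mX z : (z \in X) = is_star (t (tperm s s' z)).
  by rewrite -{1}[z](tpermK s s') mem_imset ?inE //; apply: perm_inj.
have cX : #|X| = #|[set i | is_star (t' i)]|.
  by rewrite card_imset; [exact: ec | apply: perm_inj].
have [pi [h1 h2]] := perm_of_card_eq cX.
have pis' : pi s' = s' by apply: h2; rewrite ?mX ?tpermR ?inE.
apply: (@lc_graph_relabel_iso _ _ (tperm s s' * pi)%g) => /=.
  by rewrite permM tpermL pis'.
move=> i; rewrite permM.
have hC : is_star (t' (pi (tperm s s' i))) = is_star (t i).
  by have := h1 (tperm s s' i); rewrite mX tpermK inE.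
case: (i =P s) hC => [->|/eqP nis] hC.
  rewrite tpermL pis' in hC *.
  have eB : is_clique (t' s') = is_clique (t s).
    move: hp hp'; rewrite -ec !oddD.
    by case: (is_clique (t s)); case: (is_clique (t' s')); case: (odd (star_count t)).
  by move: hs hs' eB; case: (t s); case: (t' s').
have nj : pi (tperm s s' i) != s'.
  by rewrite -{2}pis' (inj_eq perm_inj) -{2}(tpermL s s') (inj_eq perm_inj).
by move: (ht i nis) (ht' _ nj) hC; case: (t i); case: (t' _).
Qed.

Section Invariants.
Hypotheses (hk : 2 < k) (hn : 1 < n).

Lemma card_star_leaves (t : 'I_k -> part_kind) (c : 'I_k -> 'I_n) :
  #|[set x : V | is_star (t x.1) && (x.2 != c x.1)]| = star_count t * n.-1.
Proof.
rewrite -sum1dep_card big_mkcond /=.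
rewrite -(pair_bigA _ (fun i a => if is_star (t i) && (a != c i) then 1 else 0)) /=.
rewrite /star_count -sum1dep_card big_distrl /= [RHS]big_mkcond /=.
apply: eq_bigr => i _; case: (is_star (t i)) => /=; last by rewrite big1.
rewrite mul1n -big_mkcond /= sum1dep_card -[n in n.-1]card_ord -(cardsC1 (c i)).
by apply: eq_card => a; rewrite !inE.
Qed.

Lemma pendants_lc_graph p :
  kinds_ok p -> pendants (lc_graph p) = star_count (kind p) * n.-1.
Proof.
case: p => q t c hv; rewrite /pendants -(card_star_leaves t c) /=.
apply: eq_card => -[i a]; rewrite !inE /=.
case E: (is_star (t i) && (a != c i)).
  have -> : nbhd (lc_graph (LcParam q t c)) (i, a) = [set (i, c i)].
    by apply/setP => -[j b]; rewrite !inE; unfold_adj; rewrite xpair_eqE; move: E; case_bash.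
  by rewrite cards1.
apply: negbTE; rewrite neq_ltn; apply/orP; right; apply/card_gt1P.
case: q hv => [s [hs ht]|hv].
- case: (i =P s) => [->|nis].
    have [j1 [j2 [h1 h2 h12]]] := two_others s hk.
    exists (j1, c j1), (j2, c j2); rewrite !inE; unfold_adj; rewrite xpair_eqE.
    by split; move: hs h1 h2 h12; case_bash.
  have [a' na'] := exists_neq a hn.
  exists (s, a), (s, a'); rewrite !inE; unfold_adj; rewrite xpair_eqE.
  by split; move: E hs na'; case_bash.
- have [j1 [j2 [h1 h2 h12]]] := two_others i hk.
  have hvi := hv i.
  exists (j1, c j1), (j2, c j2); rewrite !inE; unfold_adj; rewrite xpair_eqE.
  by split; move: E hvi h1 h2 h12; case_bash.
Qed.

Lemma adjacent_twins_hubless p :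
  hub p = None -> kinds_ok p -> has_adjacent_twins (lc_graph p) = false.
Proof.
case: p => q t c /= -> hv; rewrite /kinds_ok /= in hv.
apply/negbTE/existsP => -[[i a] /existsP [[j b] /and3P [nxy axy /forallP hz]]].
move: nxy axy; rewrite !inE /= xpair_eqE => nxy axy.
have hvi := hv i; have hvj := hv j.
case: (i =P j) => [eij|/eqP nij].
  subst j; have [j1 [j2 [h1 h2 h12]]] := two_others i hk.
  have := hz (j1, c j1); have hv1 := hv j1; rewrite !inE !xpair_eqE.
  by move: nxy axy hvi hv1 h1; unfold_adj; case_bash.
have [a' na'] := exists_neq a hn.
have := hz (i, a'); rewrite !inE !xpair_eqE.
by move: nxy axy hvi hvj na' nij; unfold_adj; case_bash.
Qed.

Lemma triangle_hubless p : hub p = None -> kinds_ok p -> has_triangle (lc_graph p).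
Proof.
case: p => q t c /= -> hv; rewrite /kinds_ok /= in hv.
have h0 : 0 < k by lia.
have [j1 [j2 [h1 h2 h12]]] := two_others (Ordinal h0) hk.
apply/existsP; exists (Ordinal h0, c (Ordinal h0)).
apply/existsP; exists (j1, c j1); apply/existsP; exists (j2, c j2).
rewrite !inE; unfold_adj.
have hv0 := hv (Ordinal h0); have hv1 := hv j1; have hv2 := hv j2.
by move: h1 h2 h12 hv0 hv1 hv2; case_bash.
Qed.

Lemma adjacent_twins_hub p s : hub p = Some s -> kinds_ok p ->
  has_adjacent_twins (lc_graph p) = [exists i, is_clique (kind p i)].
Proof.
case: p => q t c /= -> [hs ht].
have h0n : 0 < n by lia.
pose e0 := Ordinal h0n; have [e1 ne1] := exists_neq e0 hn.
apply/idP/idP => [|/existsP [i hi]].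
  apply: contraTT => /existsPn nB; have hB i := nB i.
  apply/existsP => -[[i a] /existsP [[j b] /and3P [nxy axy /forallP hz]]].
  move: nxy axy; rewrite !inE /= xpair_eqE => nxy axy.
  have hBi := hB i; have hBj := hB j; have hti := ht i; have htj := ht j.
  have hBs := hB s.
  case: (i =P j) => [eij|/eqP nij].
    subst j; have := hz (s, a); rewrite !inE !xpair_eqE /=.
    by move: nxy axy hBi hti hs hBs; unfold_adj; case_bash.
  case: (i =P s) => [eis|/eqP nis].
    subst i; have [b' nb'] := exists_neq b hn.
    have := hz (j, b'); rewrite !inE !xpair_eqE /=.
    by move: nxy axy hBj htj hs hBs nb' nij; unfold_adj; case_bash.
  have [a' na'] := exists_neq a hn.
  have := hz (i, a'); rewrite !inE !xpair_eqE /=.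
  by move: nxy axy hBi hBj hti htj hs hBs na' nij nis; unfold_adj; case_bash.
apply/existsP; exists (i, e1); apply/existsP; exists (i, e0).
rewrite !inE xpair_eqE /= eqxx (negbTE ne1) /=; apply/andP; split.
  by unfold_adj; move: hi ne1; case_bash.
apply/forallP => -[j b]; rewrite !inE !xpair_eqE /=; unfold_adj.
have htj := ht j; case: (i =P s) => [eis|/eqP nis].
  by subst i; move: hi hs htj ne1; case_bash.
by move: hi hs htj ne1 nis; case_bash.
Qed.

Lemma triangle_hub p s : hub p = Some s -> kinds_ok p ->
  has_triangle (lc_graph p) = [exists i, is_clique (kind p i)].
Proof.
case: p => q t c /= -> [hs ht].
have h0n : 0 < n by lia.
pose e0 := Ordinal h0n; have [e1 ne1] := exists_neq e0 hn.
apply/idP/idP => [|/existsP [i hi]].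
  apply: contraTT => /existsPn hB.
  apply/existsP => -[[i a] /existsP [[j b] /existsP [[l d] /and3P [h1 h2 h3]]]].
  move: h1 h2 h3; rewrite !inE; unfold_adj.
  have := hB i; have := hB j; have := hB l; have := ht i; have := ht j; have := ht l.
  by move: hs; case_bash.
case: (i =P s) => [eis|/eqP nis].
  subst i; have [j1 [_ [h1 _ _]]] := two_others s hk.
  apply/existsP; exists (s, e1); apply/existsP; exists (s, e0).
  apply/existsP; exists (j1, c j1).
  by rewrite !inE; unfold_adj; have := ht j1; move: hi ne1 h1; case_bash.
apply/existsP; exists (i, e1); apply/existsP; exists (i, e0).
apply/existsP; exists (s, e0).
by rewrite !inE; unfold_adj; move: hi ne1 hs nis; case_bash.
Qed.

Lemma iso_invariants_hubless p : hub p = None -> kinds_ok p ->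
  iso_invariants (lc_graph p) = (star_count (kind p) * n.-1, false, true).
Proof.
move=> hp ok.
by rewrite /iso_invariants pendants_lc_graph ?adjacent_twins_hubless ?triangle_hubless.
Qed.

Lemma iso_invariants_hub p s : hub p = Some s -> kinds_ok p ->
  let b := [exists i, is_clique (kind p i)] in
  iso_invariants (lc_graph p) = (star_count (kind p) * n.-1, b, b).
Proof.
move=> hp ok.
by rewrite /iso_invariants pendants_lc_graph ?(adjacent_twins_hub hp) ?(triangle_hub hp).
Qed.

Section Representatives.
Variables (hub0 : 'I_k) (e0 : 'I_n).
Hypothesis hub0_val : val hub0 = 0.

(* The parts [1, ..., c] are stars; the kind of the hub makes [parity_ok] hold. *)
Definition hub_rep (c : nat) :=
  LcParam (Some hub0)
    (fun j => if j == hub0 then (if odd c then Clique else Indep)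
              else if j <= c then Star else Clique)
    (fun _ => e0).

Definition hubless_rep (c : nat) := lc_param_step (hub_rep c) (hub0, e0).

Lemma kinds_ok_hub_rep c : kinds_ok (hub_rep c).
Proof.
rewrite /kinds_ok /=; split; first by rewrite eqxx; case: (odd c).
by move=> j /negbTE ->; case: (j <= c).
Qed.

Lemma neq_hub0 (j : 'I_k) : (j != hub0) = (0 < j).
Proof. by rewrite lt0n -hub0_val; congr negb; apply/eqP/eqP => [->|/val_inj]. Qed.

Lemma star_count_hub_rep c : c < k -> star_count (kind (hub_rep c)) = c.
Proof.
elim: c => [_|c IH hc].
  apply/eqP; rewrite cards_eq0; apply/eqP/setP => j; rewrite !inE /=.
  by case: (j =P hub0) => [_|/eqP]; [case: (odd 0) | rewrite neq_hub0 ltnNge => /negbTE ->].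
have lz : (Ordinal hc == hub0) = false by apply/negbTE; rewrite neq_hub0.
have := @star_count_update (kind (hub_rep c)) (kind (hub_rep c.+1)) (Ordinal hc).
rewrite IH; last by lia.
rewrite /= lz leqnn ltnn /= addn0 addn1 => -> //.
move=> j /eqP nj /=; case: (j == hub0); first by case: (odd c).
have : val j != c.+1 by apply/eqP => ej; apply: nj; apply: val_inj.
by rewrite leq_eqVlt ltnS => /negbTE ->.
Qed.

Lemma admissible_hub_rep c : c < k -> admissible (hub_rep c).
Proof.
move=> hc; split; first exact: kinds_ok_hub_rep.
rewrite /parity_ok (star_count_hub_rep hc) /= eqxx.
by rewrite oddD; case: (odd c).
Qed.

Lemma hub_rep_in_orbit c : c < k ->
  lc_graph (hub_rep c) \in lc_orbit (complete_multipartite k n).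
Proof.
rewrite (complete_multipartite_lc_graph (fun _ => e0)).
elim: c => [_|c IH hc].
  have -> : lc_graph (hub_rep 0) =
            lc_graph (lc_param_step (multipartite_param (fun _ => e0)) (hub0, e0)).
    apply: lc_graph_ext => //= j; case: (j =P hub0) => [//|/eqP].
    by rewrite neq_hub0 ltnNge => /negbTE ->.
  by rewrite -local_complement_lc_graph //; apply: lc_orbit_step; rewrite inE connect0.
have lz : (Ordinal hc == hub0) = false by apply/negbTE; rewrite neq_hub0.
have -> : lc_graph (hub_rep c.+1) = lc_graph (lc_param_step (hub_rep c) (Ordinal hc, e0)).
  rewrite /lc_param_step /= lz /= eqxx ltnn /=.
  apply: lc_graph_ext => //= j; last by move=> _; case: (j == Ordinal hc).
  case: (j =P Ordinal hc) => [->|nj]; first by rewrite lz leqnn.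
  case: (j == hub0); first by case: (odd c).
  have : val j != c.+1 by apply/eqP => ej; apply: nj; apply: val_inj.
  by rewrite leq_eqVlt ltnS => /negbTE ->.
rewrite -local_complement_lc_graph; last exact: kinds_ok_hub_rep.
by apply: lc_orbit_step; apply: IH; lia.
Qed.

Lemma hubless_rep_in_orbit c : c < k ->
  lc_graph (hubless_rep c) \in lc_orbit (complete_multipartite k n).
Proof.
move=> hc; rewrite /hubless_rep -local_complement_lc_graph; last exact: kinds_ok_hub_rep.
exact: lc_orbit_step (hub_rep_in_orbit hc).
Qed.

Lemma admissible_hubless_rep c : c < k -> admissible (hubless_rep c).
Proof. by move=> hc; apply: admissible_step (admissible_hub_rep hc). Qed.

Lemma hub_hubless_rep c : hub (hubless_rep c) = None.
Proof. by rewrite /hubless_rep /lc_param_step /= eqxx. Qed.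

Lemma star_count_hubless_rep c : c < k -> star_count (kind (hubless_rep c)) = c + odd c.
Proof.
move=> hc.
have hs j : j != hub0 -> is_star (kind (hubless_rep c) j) = is_star (kind (hub_rep c) j).
  by move/negbTE => hj; rewrite /hubless_rep /lc_param_step /= eqxx /= hj; case: (j <= c).
move: (star_count_update hs); rewrite (star_count_hub_rep hc).
rewrite /hubless_rep /lc_param_step /= !eqxx /=.
by case: (odd c) => /=; rewrite ?eqxx /=; lia.
Qed.

Lemma star_count_even_hubless_rep j :
  2 * j <= k -> star_count (kind (hubless_rep (2 * j).-1)) = 2 * j.
Proof.
move=> hj; rewrite star_count_hubless_rep; last lia.
case: j hj => [//|j] _; have -> : (2 * j.+1).-1 = (2 * j).+1 by lia.
by rewrite oddS oddM /=; lia.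
Qed.

Definition class_rep (i : 'I_(k./2).+1 + 'I_k) :=
  match i with inl j => hubless_rep (2 * j).-1 | inr c => hub_rep c end.

Lemma double_ord_half (j : 'I_(k./2).+1) : 2 * j <= k.
Proof.
have := ltn_ord j; rewrite ltnS => hj.
apply: leq_trans (leq_mul (leqnn 2) hj) _.
by rewrite -[k in _ <= k]odd_double_half mul2n leq_addl.
Qed.

Lemma class_rep_in_orbit i :
  lc_graph (class_rep i) \in lc_orbit (complete_multipartite k n).
Proof.
case: i => [j|c] /=; last exact: hub_rep_in_orbit.
by apply: hubless_rep_in_orbit; have := double_ord_half j; lia.
Qed.

Lemma class_rep_inj i i' :
  graph_iso (lc_graph (class_rep i)) (lc_graph (class_rep i')) -> i = i'.
Proof.
have n1_gt0 : 0 < n.-1 by lia.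
have inv_hubless (j : 'I_(k./2).+1) :
    iso_invariants (lc_graph (class_rep (inl j))) = (2 * j * n.-1, false, true).
  have hj := double_ord_half j; have hc : (2 * j).-1 < k by lia.
  rewrite iso_invariants_hubless ?star_count_even_hubless_rep //.
  - exact: hub_hubless_rep.
  - exact: (admissible_hubless_rep hc).1.
have inv_hub (c : 'I_k) : exists b,
    iso_invariants (lc_graph (class_rep (inr c))) = (c * n.-1, b, b).
  by eexists; rewrite (@iso_invariants_hub _ hub0) ?star_count_hub_rep //; exact: kinds_ok_hub_rep.
move/iso_invariants_iso; case: i => [j|c]; case: i' => [j'|c'].
- rewrite !inv_hubless => -[/eqP]; rewrite eqn_pmul2r // eqn_pmul2l // => /eqP e.
  by congr inl; apply: val_inj.
- by have [b ->] := inv_hub c'; rewrite inv_hubless => -[_ <-].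
- by have [b ->] := inv_hub c; rewrite inv_hubless => -[_ ->].
- have [b ->] := inv_hub c; have [b' ->] := inv_hub c'.
  move=> -[/eqP]; rewrite eqn_pmul2r // => /eqP e _ _.
  by congr inr; apply: val_inj.
Qed.

Lemma class_rep_complete H : H \in lc_orbit (complete_multipartite k n) ->
  exists i, graph_iso H (lc_graph (class_rep i)).
Proof.
rewrite (complete_multipartite_lc_graph (fun _ => e0)).
case/(lc_orbit_lc_graph (admissible_multipartite _)) => p ap ->.
case E: (hub p) => [s|].
  have hc := star_count_lt_hub E ap.1.
  exists (inr (Ordinal hc)).
  apply: (lc_graph_iso_hub E _ ap (admissible_hub_rep hc)) => //.
  by rewrite star_count_hub_rep.
have even_count : ~~ odd (star_count (kind p)) by case: ap => _; rewrite /parity_ok E.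
have hj : (star_count (kind p))./2 < (k./2).+1 by rewrite ltnS half_leq // star_count_le.
have hc : (2 * (Ordinal hj)).-1 < k by have := double_ord_half (Ordinal hj); lia.
exists (inl (Ordinal hj)).
apply: lc_graph_iso_hubless E (hub_hubless_rep _) ap.1 (admissible_hubless_rep hc).1 _.
rewrite star_count_even_hubless_rep ?double_ord_half //= mul2n.
by rewrite -{1}(odd_double_half (star_count (kind p))) (negbTE even_count).
Qed.

End Representatives.
End Invariants.
End LcFamily.

Unset Implicit Arguments.

Theorem theorem15 (k n : nat) :
  3 <= k -> 2 <= n ->
  #|iso_classes (lc_orbit (complete_multipartite k n))| = k./2 + k + 1.
Proof.
move=> hk hn; have hk0 : 0 < k by lia.
have hn0 : 0 < n by lia.
have hub0_val : val (Ordinal hk0) = 0 by [].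
pose e0 := Ordinal hn0.
rewrite (card_iso_classes (class_rep_in_orbit hk hn e0 hub0_val)
          (class_rep_inj hk hn hub0_val) (class_rep_complete hk hn e0 hub0_val)).
by rewrite card_sum !card_ord; lia.
Qed.
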